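(* Let $u_1,\dots,u_n$ be Boolean variables and $C_1,\dots,C_m$ clauses, each consisting of exactly 3 literals over these variables. Let $G$ be the graph with vertex set $\{x_i,u_i,v_i,\bar u_i,y_i:1\le i\le n\}\cup\{c_j:1\le j\le m\}\cup\{s_1,s_2,s_3,s_4,t\}$ and the following edges: for each $i$, $x_iu_i$, $u_iv_i$, $v_i\bar u_i$, $\bar u_iy_i$; for each $j$, an edge from $c_j$ to $u_i$ (resp. $\bar u_i$) whenever the literal $u_i$ (resp. $\bar u_i$) appears in $C_j$; for each $j$ and each $s\in\{s_1,s_3,s_4\}$, the edge $sc_j$; the edges $s_1s_2,s_3s_2,s_4s_2$; the edges $ts_1,ts_3,ts_4$; and the edges $tu_i$, $t\bar u_i$ for all $i$. Then (a) $\tilde\gamma_c(G-e)\le 3n+2$ for every edge $e\in E(G)$, and (b) $\tilde\gamma_c(G)=3n+1$ if and only if $b_{OCD}(G)=1$. Consequently, $\{C_1,\dots,C_m\}$ is satisfiable if and only if $b_{OCD}(G)=1$.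
   Context: All graphs are finite and simple. A set $S\subseteq V$ is a dominating set of $G=(V,E)$ if every vertex not in $S$ is adjacent to a vertex of $S$. A set $\tilde D\subseteq V$ is an outer-connected dominating set of $G$ if $\tilde D$ is dominating and the induced subgraph $G[V\setminus\tilde D]$ is connected (the empty graph counts as connected). $\tilde\gamma_c(G)$ denotes the minimum size of an outer-connected dominating set of $G$. For a graph $G$ without isolated vertices, $b_{OCD}(G)$ is the minimum number of edges whose removal from $G$ yields a graph $G'$ with $\tilde\gamma_c(G')>\tilde\gamma_c(G)$. A collection of clauses is satisfiable if some truth assignment makes every clause contain a true literal. *)

From HB Require Import structures.
From mathcomp Require Import all_boot.
Set Implicit Arguments. Unset Strict Implicit. Unset Printing Implicit Defensive.

Definition simple_graph (T : finType) (g : rel T) : Prop :=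
  symmetric g /\ irreflexive g.

Definition dominating (T : finType) (g : rel T) (S : {set T}) : bool :=
  [forall x, (x \notin S) ==> [exists y, (y \in S) && g x y]].

(* The induced subgraph g[V \ D] is connected (the empty graph counts as
   connected): any two vertices outside D are joined by a path in g
   staying outside D. *)
Definition outer_connected (T : finType) (g : rel T) (D : {set T}) : bool :=
  [forall x, forall y, (x \notin D) ==> (y \notin D) ==>
     connect (fun a b => [&& g a b, a \notin D & b \notin D]) x y].

Definition ocd_set (T : finType) (g : rel T) (D : {set T}) : bool :=
  dominating g D && outer_connected g D.

(* tilde-gamma_c : minimum size of an outer-connected dominating set
   (setT is always one, so the minimum is over a nonempty family). *)
Definition ocdn (T : finType) (g : rel T) : nat :=
  \big[minn/#|T|]_(D : {set T} | ocd_set g D) #|D|.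

Definition edges (T : finType) (g : rel T) : {set {set T}} :=
  [set [set x; y] | x in T, y in T & g x y].

Definition remove_edges (T : finType) (g : rel T) (F : {set {set T}}) : rel T :=
  fun x y => g x y && ([set x; y] \notin F).

Definition no_isolated (T : finType) (g : rel T) : Prop :=
  forall x, exists y, g x y.

(* b_OCD(g): minimum number of edges whose removal increases ocdn.
   (For a graph without isolated vertices, removing all edges gives
   ocdn = #|T| > ocdn g, so the family is nonempty; the default value
   #|edges g| + 1 is only reached otherwise.) *)
Definition bondage_ocd (T : finType) (g : rel T) : nat :=
  \big[minn/(#|edges g|).+1]_(F : {set {set T}} |
       (F \subset edges g) && (ocdn g < ocdn (remove_edges g F))) #|F|.

(* A literal over variables 'I_n: (i, true) is u_i, (i, false) is bar u_i. *)
Definition literal (n : nat) := ('I_n * bool)%type.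

Definition clause (n : nat) := (3.-tuple (literal n))%type.

Definition lit_true (n : nat) (a : 'I_n -> bool) (l : literal n) : bool :=
  a l.1 == l.2.

Definition satisfiable (n m : nat) (cl : 'I_m -> clause n) : Prop :=
  exists a : 'I_n -> bool, forall j : 'I_m, has (lit_true a) (cl j).

Inductive vtx (n m : nat) : Type :=
| Vx of 'I_n | Vu of 'I_n | Vv of 'I_n | Vubar of 'I_n | Vy of 'I_n
| Vc of 'I_m | Vs1 | Vs2 | Vs3 | Vs4 | Vt.

Arguments Vs1 {n m}. Arguments Vs2 {n m}. Arguments Vs3 {n m}.
Arguments Vs4 {n m}. Arguments Vt {n m}.

Section VtxFin.
Variables n m : nat.

Definition vtx_code (v : vtx n m) : ('I_n * 'I_5) + ('I_m + 'I_5) :=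
  match v with
  | Vx i => inl (i, @Ordinal 5 0 isT) | Vu i => inl (i, @Ordinal 5 1 isT)
  | Vv i => inl (i, @Ordinal 5 2 isT) | Vubar i => inl (i, @Ordinal 5 3 isT)
  | Vy i => inl (i, @Ordinal 5 4 isT) | Vc j => inr (inl j)
  | Vs1 => inr (inr (@Ordinal 5 0 isT)) | Vs2 => inr (inr (@Ordinal 5 1 isT))
  | Vs3 => inr (inr (@Ordinal 5 2 isT)) | Vs4 => inr (inr (@Ordinal 5 3 isT))
  | Vt => inr (inr (@Ordinal 5 4 isT))
  end.

Definition vtx_decode (c : ('I_n * 'I_5) + ('I_m + 'I_5)) : option (vtx n m) :=
  match c with
  | inl (i, k) => match val k with
                  | 0 => Some (Vx m i) | 1 => Some (Vu m i) | 2 => Some (Vv m i)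
                  | 3 => Some (Vubar m i) | 4 => Some (Vy m i) | _ => None end
  | inr (inl j) => Some (Vc n j)
  | inr (inr k) => match val k with
                   | 0 => Some Vs1 | 1 => Some Vs2 | 2 => Some Vs3
                   | 3 => Some Vs4 | 4 => Some Vt | _ => None end
  end.

Lemma vtx_codeK : pcancel vtx_code vtx_decode.
Proof. by case. Qed.

End VtxFin.

HB.instance Definition _ (n m : nat) :=
  Countable.copy (vtx n m) (pcan_type (@vtx_codeK n m)).
HB.instance Definition _ (n m : nat) :=
  Finite.copy (vtx n m) (pcan_type (@vtx_codeK n m)).

Definition adj0 (n m : nat) (cl : 'I_m -> clause n) (a b : vtx n m) : bool :=
  match a, b with
  | Vx i, Vu i' => i == i'
  | Vu i, Vv i' => i == i'
  | Vv i, Vubar i' => i == i'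
  | Vubar i, Vy i' => i == i'
  | Vc j, Vu i => (i, true) \in cl j
  | Vc j, Vubar i => (i, false) \in cl j
  | Vs1, Vc _ | Vs3, Vc _ | Vs4, Vc _ => true
  | Vs1, Vs2 | Vs3, Vs2 | Vs4, Vs2 => true
  | Vt, Vs1 | Vt, Vs3 | Vt, Vs4 => true
  | Vt, Vu _ | Vt, Vubar _ => true
  | _, _ => false
  end.

Definition satG (n m : nat) (cl : 'I_m -> clause n) : rel (vtx n m) :=
  fun a b => adj0 cl a b || adj0 cl b a.

From HB Require Import structures.
From mathcomp Require Import all_boot zify.
Set Implicit Arguments. Unset Strict Implicit. Unset Printing Implicit Defensive.

(* Let D be an outer-connected dominating set of size at most 3n+1 in a spanning
   subgraph of G. Since G has at least 3n+3 vertices, every vertex outside D has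
   a neighbour outside D, so the leaves x_i, y_i lie in D; D also meets every
   gadget {u_i, v_i, ubar_i} (to dominate v_i) and {s_1, ..., s_4} (to dominate
   s_2). These 3n+1 disjoint demands exhaust D, which forces s_2 in D and
   t, c_j, s_1, s_3, s_4 outside D. Each c_j is then dominated by a literal
   vertex of D, and u_i, ubar_i are not both in D, so "u_i in D" is a satisfying
   assignment; conversely a satisfying assignment yields such a set. The same
   rigidity leaves s_1 undominated once s_1 s_2 is deleted, so that deletion
   raises the parameter. For (a), one of a few sets of size 3n+2 (the x_i, y_i,
   s_2, one vertex per gadget and one spoke s_k) is outer-connected dominating
   already in a spanning subgraph of G that misses the deleted edge. *)

Section BigMin.
Variables (I : finType) (P : pred I) (F : I -> nat) (d : nat).

Lemma bigmin_le i : P i -> \big[minn/d]_(j | P j) F j <= F i.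
Proof.
move=> Pi; rewrite unlock; have : i \in index_enum I by rewrite mem_index_enum.
elim: (index_enum I) => //= j r IHr; rewrite in_cons => /orP[/eqP<- | /IHr le_i].
  by rewrite Pi geq_minl.
by case: (P j); rewrite // geq_min le_i orbT.
Qed.

Lemma bigmin_attained :
  \big[minn/d]_(j | P j) F j = d \/
  exists2 i, P i & \big[minn/d]_(j | P j) F j = F i.
Proof.
elim/big_ind: _ => [| a b IHa IHb | i Pi]; [by left | | by right; exists i].
by rewrite /minn; case: ltnP.
Qed.

End BigMin.

Section OuterConnectedDomination.
Variables (T : finType) (g : rel T).

Lemma dominatingP (D : {set T}) :
  reflect (forall x, x \notin D -> exists2 y, y \in D & g x y) (dominating g D).
Proof.
apply: (iffP forallP) => [dom x xD | dom x]; last first.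
  by apply/implyP=> /dom[y yD gxy]; apply/existsP; exists y; rewrite yD.
by have /existsP[y /andP[yD gxy]] := implyP (dom x) xD; exists y.
Qed.

Definition outside_rel (D : {set T}) : rel T :=
  fun a b => [&& g a b, a \notin D & b \notin D].

Lemma connect_outside_step (D : {set T}) x y z : g x y -> x \notin D -> y \notin D ->
  connect (outside_rel D) y z -> connect (outside_rel D) x z.
Proof.
by move=> gxy xD yD; apply: connect_trans; apply: connect1; rewrite /outside_rel gxy xD yD.
Qed.

Lemma outer_connected_to (D : {set T}) z : symmetric g ->
  (forall x, x \notin D -> connect (outside_rel D) x z) -> outer_connected g D.
Proof.
move=> g_sym to_z; apply/forallP=> x; apply/forallP=> y; apply/implyP=> xD; apply/implyP=> yD.
have sym_out : connect_sym (outside_rel D).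
  by apply: sym_connect_sym => a b; rewrite /outside_rel g_sym [(a \notin D) && _]andbC.
by apply: connect_trans (to_z x xD) _; rewrite sym_out; apply: to_z.
Qed.

Lemma ocd_outside_nbr (D : {set T}) x : ocd_set g D -> 1 < #|~: D| -> x \notin D ->
  exists2 y, y \notin D & g x y.
Proof.
move=> /andP[_ /forallP con] two xD.
have /set0Pn[z] : (~: D) :\ x != set0.
  by rewrite -card_gt0; rewrite (cardsD1 x) !inE xD in two.
rewrite !inE => /andP[zx zD].
case/connectP: (implyP (implyP (forallP (con x) z) xD) zD) => -[| y p] /=.
  by move=> _ zx'; rewrite zx' eqxx in zx.
by case/andP=> /and3P[gxy _ yD] _ _; exists y.
Qed.

Lemma ocd_leaf (D : {set T}) x u : ocd_set g D -> 1 < #|~: D| ->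
  (forall y, g x y -> y = u) -> x \in D.
Proof.
move=> ocdD two leaf; apply: contraT => xD.
have [y yD /leaf yu] := ocd_outside_nbr ocdD two xD.
case/andP: ocdD => /dominatingP/(_ x xD)[y' y'D /leaf y'u].
by rewrite yu -y'u y'D in yD.
Qed.

Lemma ocd_setT : ocd_set g setT.
Proof.
apply/andP; split; first by apply/dominatingP=> x; rewrite inE.
by apply/forallP=> x; apply/forallP=> y; rewrite inE.
Qed.

Lemma ocdn_le (D : {set T}) : ocd_set g D -> ocdn g <= #|D|.
Proof. exact: bigmin_le. Qed.

Lemma ocdn_ge k : (forall D, ocd_set g D -> k <= #|D|) -> k <= ocdn g.
Proof.
move=> ge_k; rewrite /ocdn; elim/big_ind: _ => //; last by move=> a b; rewrite leq_min => ->.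
by rewrite -cardsT; apply: ge_k; apply: ocd_setT.
Qed.

Lemma ocdn_attained : exists2 D, ocd_set g D & ocdn g = #|D|.
Proof.
rewrite /ocdn; case: (bigmin_attained (ocd_set g) (fun D => #|D|) #|T|) => [-> | //].
by exists setT; rewrite ?cardsT ?ocd_setT.
Qed.

End OuterConnectedDomination.

Lemma ocd_set_sub (T : finType) (g g' : rel T) (D : {set T}) :
  subrel g g' -> ocd_set g D -> ocd_set g' D.
Proof.
move=> sub /andP[/dominatingP dom /forallP con]; apply/andP; split.
  by apply/dominatingP=> x /dom[y yD /sub g'xy]; exists y.
apply/forallP=> x; apply/forallP=> y; apply/implyP=> xD; apply/implyP=> yD.
apply: connect_sub (implyP (implyP (forallP (con x) y) xD) yD) => a b.
by case/and3P=> gab aD bD; apply: connect1; rewrite /= aD bD (sub _ _ gab).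
Qed.

Lemma eq_ocdn (T : finType) (g g' : rel T) : g =2 g' -> ocdn g = ocdn g'.
Proof.
move=> eq_g; apply: eq_bigl => D.
by apply/idP/idP; apply: ocd_set_sub => x y; rewrite eq_g.
Qed.

Section EdgeRemoval.
Variables (T : finType) (g : rel T).

Lemma set2_eq_cases (a b c d : T) :
  [set a; b] = [set c; d] -> (a = c /\ b = d) \/ (a = d /\ b = c).
Proof.
move=> eq_ab.
have : a \in [set c; d] by rewrite -eq_ab set21.
have : b \in [set c; d] by rewrite -eq_ab set22.
have : c \in [set a; b] by rewrite eq_ab set21.
have : d \in [set a; b] by rewrite eq_ab set22.
rewrite !inE; by do 4 (case/orP=> /eqP ?); subst; auto.
Qed.

Lemma subrel_remove_edge (k : rel T) x y : symmetric k -> subrel k g -> ~~ k x y ->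
  subrel k (remove_edges g [set [set x; y]]).
Proof.
move=> k_sym sub kxy a b kab; rewrite /remove_edges (sub _ _ kab) in_set1 /=.
apply: contraNN kxy => /eqP/set2_eq_cases[[<- <-] | [<- <-]] //.
by rewrite k_sym.
Qed.

Lemma mem_edges x y : g x y -> [set x; y] \in edges g.
Proof. by move=> gxy; apply/imset2P; exists x y; rewrite ?inE. Qed.

Lemma remove_no_edge : remove_edges g set0 =2 g.
Proof. by move=> x y; rewrite /remove_edges in_set0 andbT. Qed.

Lemma bondage_ocd_eq1 : edges g != set0 -> bondage_ocd g = 1 <->
  exists2 e, e \in edges g & ocdn g < ocdn (remove_edges g [set e]).
Proof.
move=> edges_n0; rewrite /bondage_ocd.
set P := fun F : {set {set T}} => (F \subset edges g) && (ocdn g < ocdn (remove_edges g F)).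
split=> [| [e e_g lt_e]].
  case: (bigmin_attained P (fun F => #|F|) (#|edges g|).+1) => [-> [] | [F PF ->]].
    by move/eqP; rewrite cards_eq0 (negPf edges_n0).
  case/eqP/cards1P=> e eF; move: PF; rewrite /P eF sub1set => /andP[e_g lt_e].
  by exists e.
apply/eqP; rewrite eqn_leq; apply/andP; split.
  by rewrite -(cards1 e); apply: bigmin_le; rewrite /P sub1set e_g.
elim/big_ind: _ => // [a b | F /andP[_]]; first by rewrite leq_min => ->.
rewrite card_gt0; apply: contraTneq => ->.
by rewrite (eq_ocdn remove_no_edge) ltnn.
Qed.

End EdgeRemoval.

Inductive gadget_pos := AtU | AtV | AtUbar.

Definition gadget_pos_eq_dec (L L' : gadget_pos) : {L = L'} + {L <> L'}.
Proof. by decide equality. Defined.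

HB.instance Definition _ := comparableMixin gadget_pos_eq_dec.

Inductive spoke := S1 | S3 | S4.

Definition spoke_next (k : spoke) : spoke :=
  match k with S1 => S3 | S3 => S4 | S4 => S1 end.

Section Construction.
Variables (n m : nat) (cl : 'I_m -> clause n).
Local Notation V := (vtx n m).
Local Notation G := (satG cl).

Lemma satG_sym : symmetric G.
Proof. by move=> x y; rewrite /satG orbC. Qed.

Definition spoke_vtx (k : spoke) : V :=
  match k with S1 => Vs1 | S3 => Vs3 | S4 => Vs4 end.

Lemma spoke_next_neq k : spoke_vtx (spoke_next k) != spoke_vtx k.
Proof. by case: k. Qed.

Lemma nbr_x i y : G (Vx m i) y -> y = Vu m i.
Proof. by rewrite /satG; case: y => //= j; rewrite ?orbF => /eqP->. Qed.

Lemma nbr_y i y : G (Vy m i) y -> y = Vubar m i.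
Proof. by rewrite /satG; case: y => //= j; rewrite ?orbF => /eqP->. Qed.

Lemma nbr_v i y : G (Vv m i) y -> y = Vu m i \/ y = Vubar m i.
Proof. by rewrite /satG; case: y => //= j; rewrite ?orbF => /eqP->; auto. Qed.

Lemma nbr_s2 y : G Vs2 y -> exists k, y = spoke_vtx k.
Proof. by rewrite /satG; case: y => //= _; [exists S1 | exists S3 | exists S4]. Qed.

Lemma nbr_spoke k y : G (spoke_vtx k) y -> [\/ y = Vs2, y = Vt | exists j, y = Vc n j].
Proof. by rewrite /satG; case: k; case: y => //= *; eauto using Or31, Or32, Or33. Qed.

Lemma nbr_c j y : G (Vc n j) y ->
  [\/ exists k, y = spoke_vtx k,
      exists2 i, y = Vu m i & (i, true) \in cl j
    | exists2 i, y = Vubar m i & (i, false) \in cl j].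
Proof.
rewrite /satG; case: y => //= [i | i | | |]; rewrite ?orbF.
- by move=> il; apply: Or32; exists i.
- by move=> il; apply: Or33; exists i.
- by move=> _; apply: Or31; exists S1.
- by move=> _; apply: Or31; exists S3.
- by move=> _; apply: Or31; exists S4.
Qed.

Definition vtx_embed (p : (('I_n + 'I_n) + 'I_n) + (bool + unit)) : V :=
  match p with
  | inl (inl (inl i)) => Vx m i
  | inl (inl (inr i)) => Vu m i
  | inl (inr i) => Vy m i
  | inr (inl b) => if b then Vs1 else Vs2
  | inr (inr _) => Vt
  end.

Lemma vtx_embed_inj : injective vtx_embed.
Proof. by do 2 case=> [[[?|?]|?]|[[]|[]]]; move=> //= [->]. Qed.

Lemma card_vtx_ge : 3 * n + 3 <= #|{: V}|.
Proof.
have := leq_card _ vtx_embed_inj.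
by rewrite !card_sum !card_ord card_bool card_unit; apply: leq_trans; lia.
Qed.

Definition core_index (v : V) : option ((('I_n + 'I_n) + 'I_n) + unit) :=
  match v with
  | Vx i => Some (inl (inl (inl i)))
  | Vy i => Some (inl (inl (inr i)))
  | Vu i | Vv i | Vubar i => Some (inl (inr i))
  | Vs1 | Vs2 | Vs3 | Vs4 => Some (inr tt)
  | _ => None
  end.

Section LowerBound.
Variables (H : rel V) (D : {set V}).
Hypotheses (H_sub : subrel H G) (D_ocd : ocd_set H D) (D_small : #|D| <= 3 * n + 1).

Lemma two_outside : 1 < #|~: D|.
Proof. by have := card_vtx_ge; rewrite -(cardsC D); lia. Qed.

Lemma dominated x : x \notin D -> exists2 y, y \in D & G x y.
Proof. by case/andP: D_ocd => /dominatingP dom _ /dom[y yD /H_sub]; exists y. Qed.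

Lemma Vx_in i : Vx m i \in D.
Proof. by apply: (ocd_leaf D_ocd two_outside) => y /H_sub/nbr_x ->. Qed.

Lemma Vy_in i : Vy m i \in D.
Proof. by apply: (ocd_leaf D_ocd two_outside) => y /H_sub/nbr_y ->. Qed.

Definition gadget_rep i : V :=
  if Vu m i \in D then Vu m i else if Vv m i \in D then Vv m i else Vubar m i.

Definition hub_rep : V :=
  if Vs2 \in D then Vs2 else if Vs1 \in D then Vs1 else if Vs3 \in D then Vs3 else Vs4.

Lemma gadget_rep_cases i :
  [\/ gadget_rep i = Vu m i, gadget_rep i = Vv m i | gadget_rep i = Vubar m i].
Proof. by rewrite /gadget_rep; case: ifP => _; [| case: ifP => _]; constructor. Qed.

Lemma hub_rep_cases : hub_rep = Vs2 \/ exists k, hub_rep = spoke_vtx k.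
Proof.
rewrite /hub_rep; case: ifP => _; [by left | right].
case: ifP => _; [by exists S1 | case: ifP => _; [by exists S3 | by exists S4]].
Qed.

Lemma gadget_rep_in i : gadget_rep i \in D.
Proof.
rewrite /gadget_rep; case: ifPn => // uD; case: ifPn => // vD.
have [y yD /nbr_v[] eq_y] := dominated vD; move: yD; rewrite eq_y //.
by rewrite (negPf uD).
Qed.

Lemma hub_rep_in : hub_rep \in D.
Proof.
rewrite /hub_rep; case: ifPn => // s2D; case: ifPn => // s1D; case: ifPn => // s3D.
have [y yD /nbr_s2[k eq_y]] := dominated s2D.
by move: yD; rewrite eq_y; case: k {eq_y} => /=; rewrite ?(negPf s1D) ?(negPf s3D).
Qed.

Definition core_vtx (p : (('I_n + 'I_n) + 'I_n) + unit) : V :=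
  match p with
  | inl (inl (inl i)) => Vx m i
  | inl (inl (inr i)) => Vy m i
  | inl (inr i) => gadget_rep i
  | inr _ => hub_rep
  end.

Lemma core_vtxK : pcancel core_vtx core_index.
Proof.
case=> [[[i|i]|i]|[]] //=; first by case: (gadget_rep_cases i) => ->.
by case: hub_rep_cases => [|[[]]] ->.
Qed.

Lemma card_core : #|core_vtx @: setT| = 3 * n + 1.
Proof.
rewrite card_imset ?cardsT ?card_sum ?card_ord ?card_unit; last exact: pcan_inj core_vtxK.
by rewrite !mulSn mul0n addn0 addnA.
Qed.

Lemma core_eq : D = core_vtx @: setT.
Proof.
apply/esym/eqP; rewrite eqEcard card_core D_small andbT.
apply/subsetP=> _ /imsetP[[[[i|i]|i]|[]] _ ->] /=.
- exact: Vx_in.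
- exact: Vy_in.
- exact: gadget_rep_in.
- exact: hub_rep_in.
Qed.

Lemma mem_core z : z \in D ->
  [\/ exists i, z = Vx m i, exists i, z = Vy m i, exists i, z = gadget_rep i | z = hub_rep].
Proof.
rewrite core_eq => /imsetP[[[[i|i]|i]|[]] _ ->];
  by [apply: Or41; exists i | apply: Or42; exists i | apply: Or43; exists i | apply: Or44].
Qed.

Lemma Vt_notin : Vt \notin D.
Proof.
apply/negP=> /mem_core[[i]|[i]|[i]|] //; first by case: (gadget_rep_cases i) => ->.
by case: hub_rep_cases => [|[[]]] ->.
Qed.

Lemma Vc_notin j : Vc n j \notin D.
Proof.
apply/negP=> /mem_core[[i]|[i]|[i]|] //; first by case: (gadget_rep_cases i) => ->.
by case: hub_rep_cases => [|[[]]] ->.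
Qed.

Lemma spoke_in k : spoke_vtx k \in D -> spoke_vtx k = hub_rep.
Proof.
by case/mem_core=> [[i]|[i]|[i]|->] //; case: k => //; case: (gadget_rep_cases i) => ->.
Qed.

Lemma Vs2_in : Vs2 \in D.
Proof.
apply: contraT => s2D; case: hub_rep_cases => [eq_h | [k eq_h]].
  by move: hub_rep_in; rewrite eq_h (negPf s2D).
have k'D : spoke_vtx (spoke_next k) \notin D.
  by apply: contra (spoke_next_neq k) => /spoke_in->; rewrite eq_h.
have [y yD /nbr_spoke[eq_y | eq_y | [j eq_y]]] := dominated k'D; move: yD; rewrite eq_y.
- by rewrite (negPf s2D).
- by rewrite (negPf Vt_notin).
- by rewrite (negPf (Vc_notin j)).
Qed.

Lemma hub_rep_Vs2 : hub_rep = Vs2.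
Proof. by rewrite /hub_rep Vs2_in. Qed.

Lemma spoke_notin k : spoke_vtx k \notin D.
Proof. by apply/negP=> /spoke_in; rewrite hub_rep_Vs2; case: k. Qed.

Lemma Vubar_notin i : Vu m i \in D -> Vubar m i \notin D.
Proof.
move=> uD; apply/negP=> /mem_core[[j]|[j]|[j eq_j]|] //; last by rewrite hub_rep_Vs2.
have eq_ji : j = i by case: (gadget_rep_cases j) eq_j => -> // [].
by move: eq_j; rewrite eq_ji /gadget_rep uD.
Qed.

End LowerBound.

Lemma ocd_card_ge H D : subrel H G -> ocd_set H D -> 3 * n + 1 <= #|D|.
Proof.
move=> H_sub D_ocd; case: (leqP #|D| (3 * n + 1)) => [small | /ltnW //].
by rewrite (core_eq H_sub D_ocd small) card_core.
Qed.

Lemma ocdn_satG_ge : 3 * n + 1 <= ocdn G.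
Proof. by apply: ocdn_ge => D; apply: ocd_card_ge. Qed.

Lemma ocdn_remove_s1s2 : 3 * n + 2 <= ocdn (remove_edges G [set [set Vs1; Vs2]]).
Proof.
apply: ocdn_ge => D D_ocd; case: (leqP #|D| (3 * n + 1)) => [small | ?]; last lia.
exfalso.
have H_sub : subrel (remove_edges G [set [set Vs1; Vs2]]) G by move=> x y /andP[].
have s1D := spoke_notin H_sub D_ocd small S1.
case/andP: (D_ocd) => /dominatingP/(_ _ s1D)[y yD Hy].
case/H_sub/nbr_spoke: (Hy) => [eq_y | eq_y | [j eq_y]]; subst y.
- by rewrite /remove_edges inE eqxx andbF in Hy.
- by rewrite (negPf (Vt_notin H_sub D_ocd small)) in yD.
- by rewrite (negPf (Vc_notin H_sub D_ocd small j)) in yD.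
Qed.

Lemma ocdn_sat : ocdn G <= 3 * n + 1 -> satisfiable cl.
Proof.
have [D D_ocd ->] := ocdn_attained G; move=> small.
have G_sub : subrel G G by [].
exists (fun i => Vu m i \in D) => j.
have cD := Vc_notin G_sub D_ocd small j.
have [y yD /nbr_c[[k eq_y] | [i eq_y il] | [i eq_y il]]] := dominated G_sub D_ocd cD;
  subst y.
- by rewrite (negPf (spoke_notin G_sub D_ocd small k)) in yD.
- by apply/hasP; exists (i, true); rewrite /lit_true ?yD.
- apply/hasP; exists (i, false); rewrite /lit_true //= eqbF_neg.
  by apply: contraTN yD => /(Vubar_notin G_sub D_ocd small).
Qed.

Section Assignment.
Variables (a : 'I_n -> bool) (i0 : 'I_n).
Hypothesis a_sat : forall j, has (lit_true a) (cl j).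

Definition literal_vtx (l : literal n) : V := if l.2 then Vu m l.1 else Vubar m l.1.

Definition assignment_set : {set V} :=
  [set v | match v with
           | Vx _ | Vy _ | Vs2 => true
           | Vu i => a i
           | Vubar i => ~~ a i
           | _ => false
           end].

Lemma literal_vtx_in l : lit_true a l -> literal_vtx l \in assignment_set.
Proof. by case: l => i [] /eqP ai; rewrite inE /= ai. Qed.

Lemma literal_vtx_notin l : ~~ lit_true a l -> literal_vtx l \notin assignment_set.
Proof. by case: l => i [] /eqP ai; rewrite inE /=; case: (a i) ai. Qed.

Lemma assignment_dominating : dominating G assignment_set.
Proof.
apply/dominatingP=> -[i|i|i|i|i|j| | | | | ]; rewrite inE //= => ai.
- by exists (Vx m i); rewrite ?inE // /satG /= eqxx.
- exists (literal_vtx (i, a i)); first exact/literal_vtx_in/eqxx.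
  by rewrite /literal_vtx /satG; case: (a i) => /=; rewrite eqxx ?orbT.
- by exists (Vy m i); rewrite ?inE // /satG /= eqxx ?orbT.
- have /hasP[l l_in l_true] := a_sat j; exists (literal_vtx l); first exact: literal_vtx_in.
  by move: l_in; rewrite /literal_vtx /satG; case: l {l_true} => i [] /= ->.
- by exists Vs2; rewrite ?inE.
- by exists Vs2; rewrite ?inE.
- by exists Vs2; rewrite ?inE.
- exists (literal_vtx (i0, a i0)); first exact/literal_vtx_in/eqxx.
  by rewrite /literal_vtx /satG; case: (a i0).
Qed.

Lemma assignment_outer_connected : outer_connected G assignment_set.
Proof.
apply: (outer_connected_to (z := Vt)) satG_sym _ => v.
have tA : Vt \notin assignment_set by rewrite inE.
have false_lit i : literal_vtx (i, ~~ a i) \notin assignment_set.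
  by apply: literal_vtx_notin; rewrite /lit_true /=; case: (a i).
have to_t w : G w Vt -> w \notin assignment_set ->
    connect (outside_rel G assignment_set) w Vt.
  by move=> wt wA; apply: connect_outside_step wt wA tA _.
case: v => [i|i|i|i|i|j| | | | | ]; rewrite inE //= => vA; try exact: connect0.
- by apply: to_t; rewrite ?inE.
- have lit_v : G (Vv m i) (literal_vtx (i, ~~ a i)).
    by rewrite /literal_vtx /satG; case: (a i) => /=; rewrite eqxx ?orbT.
  apply: (connect_outside_step lit_v _ (false_lit i)); first by rewrite inE.
  by apply: to_t (false_lit i); rewrite /literal_vtx; case: (a i).
- by apply: to_t; rewrite ?inE.
- by apply: (connect_outside_step (y := Vs1)); rewrite ?inE //; apply: to_t; rewrite ?inE.
- by apply: to_t; rewrite ?inE.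
- by apply: to_t; rewrite ?inE.
- by apply: to_t; rewrite ?inE.
Qed.

Definition assignment_vtx (p : (('I_n + 'I_n) + 'I_n) + unit) : V :=
  match p with
  | inl (inl (inl i)) => Vx m i
  | inl (inl (inr i)) => Vy m i
  | inl (inr i) => literal_vtx (i, a i)
  | inr _ => Vs2
  end.

Lemma card_assignment_set : #|assignment_set| <= 3 * n + 1.
Proof.
have sub : assignment_set \subset assignment_vtx @: setT.
  apply/subsetP=> -[i|i|i|i|i|j| | | | | ]; rewrite inE //= => vA.
  - by apply/imsetP; exists (inl (inl (inl i))).
  - by apply/imsetP; exists (inl (inr i)); rewrite //= /literal_vtx vA.
  - by apply/imsetP; exists (inl (inr i)); rewrite //= /literal_vtx (negPf vA).
  - by apply/imsetP; exists (inl (inl (inr i))).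
  - by apply/imsetP; exists (inr tt).
apply: leq_trans (subset_leq_card sub) (leq_trans (leq_imset_card _ _) _).
by rewrite cardsT !card_sum !card_ord card_unit !mulSn mul0n addn0 addnA.
Qed.

End Assignment.

Lemma sat_ocdn : 0 < m -> satisfiable cl -> ocdn G <= 3 * n + 1.
Proof.
move=> m_gt0 [a a_sat]; set i0 := (tnth (cl (Ordinal m_gt0)) ord0).1.
apply: leq_trans (ocdn_le _) (card_assignment_set a).
apply/andP; split; first exact: assignment_dominating i0 a_sat.
exact: assignment_outer_connected.
Qed.

Definition gadget_vtx (L : gadget_pos) i : V :=
  match L with AtU => Vu m i | AtV => Vv m i | AtUbar => Vubar m i end.

(* The certificate [cert L q r] is a spanning
   subgraph of G in which it is already outer-connected dominating: the spoke
   after q dominates t and the c_j, the next spoke joins the c_j to t, and the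
   spoke q hangs off t if r and off the c_j otherwise. *)
Definition config_set L q : {set V} :=
  [set v | match v with
           | Vx _ | Vy _ | Vs2 => true
           | Vu _ => L == AtU
           | Vv _ => L == AtV
           | Vubar _ => L == AtUbar
           | Vs1 | Vs3 | Vs4 => v == spoke_vtx (spoke_next q)
           | _ => false
           end].

Definition cert_arc L q (r : bool) (a b : V) : bool :=
  let s := spoke_vtx (spoke_next q) in
  let p := spoke_vtx (spoke_next (spoke_next q)) in
  match a, b with
  | Vx i, Vu i' => (i == i') && (L != AtU)
  | Vu i, Vv i' => (i == i') && (L != AtV)
  | Vv i, Vubar i' => (i == i') && (L != AtV)
  | Vubar i, Vy i' => (i == i') && (L != AtUbar)
  | Vt, Vu _ => L != AtU
  | Vt, Vubar _ => L != AtUbar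
  | Vt, w => [|| w == s, w == p | r && (w == spoke_vtx q)]
  | Vc _, w => [|| w == s, w == p | ~~ r && (w == spoke_vtx q)]
  | Vs2, w => (w == p) || (w == spoke_vtx q)
  | _, _ => false
  end.

Definition cert L q r : rel V := fun a b => cert_arc L q r a b || cert_arc L q r b a.

Lemma cert_sym L q r : symmetric (cert L q r).
Proof. by move=> a b; rewrite /cert orbC. Qed.

Lemma cert_sub L q r : subrel (cert L q r) G.
Proof.
move=> a b; rewrite /cert /satG.
case: a => [i|i|i|i|i|j| | | | | ]; case: b => [i'|i'|i'|i'|i'|j'| | | | | ] //=;
  rewrite ?orbF ?orbT //; try by case: q; case: r.
all: by case/andP=> /eqP-> _; rewrite eqxx ?orbT.
Qed.

Local Ltac dominate_by w :=
  exists w; [by rewrite inE | by rewrite /cert /= ?eqxx ?orbT].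

Local Ltac hop w :=
  apply: (connect_outside_step (y := w));
  [by rewrite /cert /= ?eqxx ?orbT | by rewrite inE | by rewrite inE | ].

Local Ltac to_t := hop (Vt : V); exact: connect0.

Lemma cert_dominating L q r : dominating (cert L q r) (config_set L q).
Proof.
apply/dominatingP=> -[i|i|i|i|i|j| | | | | ]; rewrite inE //=.
- by case: L => // _; dominate_by (Vx m i).
- by case: L => // _; [dominate_by (Vu m i) | dominate_by (Vubar m i)].
- by case: L => // _; dominate_by (Vy m i).
all: by case: q => // _; first [dominate_by (Vs2 : V) | dominate_by (Vs1 : V)
                        | dominate_by (Vs3 : V) | dominate_by (Vs4 : V)].
Qed.

Lemma cert_outer_connected L q r : 0 < m -> outer_connected (cert L q r) (config_set L q).
Proof.
move=> m_gt0; apply: (outer_connected_to (z := Vt)) (@cert_sym L q r) _.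
set j0 := Ordinal m_gt0.
move=> -[i|i|i|i|i|j| | | | | ]; rewrite inE //=; try by move=> _; exact: connect0.
- by case: L => // _; to_t.
- by case: L => // _; [hop (Vubar m i) | hop (Vu m i)]; to_t.
- by case: L => // _; to_t.
- by case: q => _; [hop (Vs4 : V) | hop (Vs1 : V) | hop (Vs3 : V)]; to_t.
all: case: q; case: r => //= _; try by to_t.
- by hop (Vc n j0); hop (Vs4 : V); to_t.
- by hop (Vc n j0); hop (Vs1 : V); to_t.
- by hop (Vc n j0); hop (Vs3 : V); to_t.
Qed.

Local Ltac avoided_by L q r := by exists L, q, r; rewrite /cert /= ?andbF.

Lemma arc_avoided x y : adj0 cl x y -> exists L q r, ~~ cert L q r x y.
Proof.
case: x => [i|i|i|i|i|j| | | | | ]; case: y => [i'|i'|i'|i'|i'|j'| | | | | ] //= _;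
  first [avoided_by AtV S1 true | avoided_by AtU S1 true | avoided_by AtUbar S1 true
        | avoided_by AtV S3 true | avoided_by AtV S4 true | avoided_by AtV S1 false
        | avoided_by AtV S3 false | avoided_by AtV S4 false].
Qed.

Lemma edge_avoided x y : G x y -> exists L q r, ~~ cert L q r x y.
Proof.
case/orP=> [/arc_avoided // | /arc_avoided[L [q [r not_cert]]]].
by exists L, q, r; rewrite cert_sym.
Qed.

Definition config_vtx L q (p : (('I_n + 'I_n) + 'I_n) + bool) : V :=
  match p with
  | inl (inl (inl i)) => Vx m i
  | inl (inl (inr i)) => Vy m i
  | inl (inr i) => gadget_vtx L i
  | inr true => Vs2
  | inr false => spoke_vtx (spoke_next q)
  end.

Lemma config_set_sub L q : config_set L q \subset config_vtx L q @: setT.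
Proof.
apply/subsetP=> -[i|i|i|i|i|j| | | | | ]; rewrite inE //= => v_in; apply/imsetP.
- by exists (inl (inl (inl i))).
- by case: L v_in => // _; exists (inl (inr i)).
- by case: L v_in => // _; exists (inl (inr i)).
- by case: L v_in => // _; exists (inl (inr i)).
- by exists (inl (inl (inr i))).
all: first [by exists (inr true) | by case: q v_in => /eqP // ->; exists (inr false)].
Qed.

Lemma card_config_set L q : #|config_set L q| <= 3 * n + 2.
Proof.
apply: leq_trans (subset_leq_card (config_set_sub L q)) (leq_trans (leq_imset_card _ _) _).
by rewrite cardsT !card_sum !card_ord card_bool !mulSn mul0n addn0 addnA.
Qed.

Lemma ocdn_remove_edge_le x y : 0 < m -> G x y ->
  ocdn (remove_edges G [set [set x; y]]) <= 3 * n + 2.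
Proof.
move=> m_gt0 /edge_avoided[L [q [r not_cert]]]; apply: leq_trans (card_config_set L q).
have sub := subrel_remove_edge (@cert_sym L q r) (@cert_sub L q r) not_cert.
apply: ocdn_le (ocd_set_sub sub _).
by apply/andP; split; [exact: cert_dominating | exact: cert_outer_connected].
Qed.

End Construction.

Theorem claim5p4 (n m : nat) (cl : 'I_m -> clause n)
  (Hm : 0 < m) (Hcl : forall j : 'I_m, uniq (cl j)) :
  (forall x y : vtx n m, satG cl x y ->
     ocdn (remove_edges (satG cl) [set [set x; y]]) <= 3 * n + 2)
  /\ (ocdn (satG cl) = 3 * n + 1 <-> bondage_ocd (satG cl) = 1)
  /\ (satisfiable cl <-> bondage_ocd (satG cl) = 1).
Proof.
(* Repeated literals do not change the graph. *)
have part_a x y : satG cl x y -> ocdn (remove_edges (satG cl) [set [set x; y]]) <= 3 * n + 2.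
  exact: ocdn_remove_edge_le Hm.
have bondage1 : ocdn (satG cl) = 3 * n + 1 <-> bondage_ocd (satG cl) = 1.
  rewrite bondage_ocd_eq1; last by apply/set0Pn; exists [set Vs1; Vs2]; apply: mem_edges.
  split=> [eq_ocdn | [e /imset2P[x y _] /[!inE] Gxy -> lt_ocdn]].
    exists [set Vs1; Vs2]; first exact: mem_edges.
    by rewrite eq_ocdn -addnS; apply: ocdn_remove_s1s2.
  apply/eqP; rewrite eqn_leq ocdn_satG_ge andbT.
  by have := leq_trans lt_ocdn (part_a x y Gxy); rewrite addn2 addn1 ltnS.
have sat_ocdn_eq : satisfiable cl <-> ocdn (satG cl) = 3 * n + 1.
  split=> [sat_cl | eq_ocdn]; last by apply: ocdn_sat; rewrite eq_ocdn.
  by apply/eqP; rewrite eqn_leq ocdn_satG_ge sat_ocdn.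
by split; [exact: part_a | rewrite sat_ocdn_eq].
Qed.
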